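(* Let $\ell\ge 3$ be an integer and let $G$ be a finite graph containing no cycle of length $\ell$ as a subgraph. Then \[ t(G)\le \frac{1}{3}(\ell-3)\,e(G), \] where $e(G)$ is the number of edges of $G$.
   Context: All graphs are simple. $t(G)$ denotes the number of triangles ($K_3$ subgraphs) in $G$. *)

From mathcomp Require Import all_boot.
Set Implicit Arguments. Unset Strict Implicit. Unset Printing Implicit Defensive.

Definition simple_graph (T : finType) (e : rel T) : Prop :=
  symmetric e /\ irreflexive e.

Definition is_clique (T : finType) (e : rel T) (A : {set T}) : bool :=
  [forall x in A, forall y in A, (x != y) ==> e x y].

Definition num_edges (T : finType) (e : rel T) : nat :=
  #|[set A : {set T} | (#|A| == 2) && is_clique e A]|.

Definition num_triangles (T : finType) (e : rel T) : nat :=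
  #|[set A : {set T} | (#|A| == 3) && is_clique e A]|.

Definition has_cycle (T : finType) (e : rel T) (l : nat) : Prop :=
  exists f : nat -> T,
    {in [pred i | i < l] &, injective f} /\
    (forall i, i < l -> e (f i) (f (i.+1 %% l))).

From mathcomp Require Import all_boot zify.
From Stdlib Require Import Classical.
Set Implicit Arguments. Unset Strict Implicit. Unset Printing Implicit Defensive.

(* Counting each triangle at each of its three vertices, 3 t(G) is the sum
   over v of the number of edges inside the neighbourhood N(v).  An l-cycle is
   the same as a vertex v together with a path on l - 1 vertices inside N(v),
   so each N(v) has no such path, and the Erdos-Gallai theorem for paths bounds
   twice its number of edges by (l - 3) deg v.  Summing over v gives
   6 t(G) <= (l - 3) * 2 e(G).

   Erdos-Gallai (no path with k edges forces 2 e <= (k - 1) n) is proved by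
   induction on n: a vertex of degree < k/2 can be deleted; otherwise the two
   ends of a longest path have degree sum exceeding its length, so its vertices
   carry a Hamiltonian cycle, hence form a whole component on at most k
   vertices, which can be split off. *)

Lemma double_counting (T : finType) (F : {set {set T}}) c :
  (forall A, A \in F -> #|A| = c) -> c * #|F| = \sum_a #|[set A in F | a \in A]|.
Proof.
move=> cardF; rewrite mulnC -sum_nat_const.
transitivity (\sum_(A in F) #|A|); first by apply: eq_bigr => A /cardF ->.
transitivity (\sum_A \sum_a ((A \in F) && (a \in A) : nat)).
  rewrite big_mkcond /=; apply: eq_bigr => A _.
  case: (A \in F) => /=; last by rewrite big1.
  by rewrite -sum1_card big_mkcond.
rewrite exchange_big /=; apply: eq_bigr => a _.
by rewrite -sum1_card [RHS]big_mkcond /=; apply: eq_bigr => A _; rewrite inE.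
Qed.

Lemma has_cycle_of_seq (T : finType) (e : rel T) (v : T) t :
  uniq (v :: t) -> cycle e (v :: t) -> has_cycle e (size t).+1.
Proof.
move=> uniq_vt /= /(pathP v) cyc_vt.
exists (nth v (v :: t)); split.
  by move=> i j; rewrite !inE => ilt jlt /eqP; rewrite nth_uniq // => /eqP.
move=> i ilt; have := cyc_vt i; rewrite size_rcons => /(_ ilt).
rewrite -rcons_cons !nth_rcons /= ilt.
case: (ltngtP i (size t)) ilt => [lt_i _ | gt_i | -> _].
- by rewrite modn_small.
- by rewrite ltnS leqNgt gt_i.
- by rewrite modnn.
Qed.

Section SimpleGraph.

Variables (T : finType) (e : rel T).
Hypotheses (e_sym : symmetric e) (e_irr : irreflexive e).

Lemma cliqueP (A : {set T}) :
  reflect {in A &, forall x y, x != y -> e x y} (is_clique e A).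
Proof.
apply: (iffP forallP) => [cl x y xA yA | cl x].
  by move: (cl x) => /implyP/(_ xA)/forallP/(_ y)/implyP/(_ yA)/implyP.
by apply/implyP => xA; apply/forallP => y; apply/implyP => yA; apply/implyP; apply: cl.
Qed.

Lemma adj_neq a b : e a b -> a != b.
Proof. by apply: contraTneq => ->; rewrite e_irr. Qed.

Lemma is_clique2 a b : a != b -> is_clique e [set a; b] = e a b.
Proof.
move=> neq_ab; apply/cliqueP/idP => [cl | e_ab x y].
  by apply: cl; rewrite ?inE ?eqxx ?orbT.
by rewrite !inE => /orP[]/eqP-> /orP[]/eqP->; rewrite ?eqxx // => _; rewrite e_sym.
Qed.

Definition nbhd (S : {set T}) (a : T) : {set T} := [set b in S | e a b].

Definition degsum (S : {set T}) : nat := \sum_(a in S) #|nbhd S a|.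

Definition edges_in (S : {set T}) : {set {set T}} :=
  [set A : {set T} | [&& #|A| == 2, is_clique e A & A \subset S]].

Definition triangles : {set {set T}} :=
  [set A : {set T} | (#|A| == 3) && is_clique e A].

Lemma num_edgesE : num_edges e = #|edges_in setT|.
Proof. by apply: eq_card => A; rewrite !inE subsetT andbT. Qed.

Lemma edges_in_at (S : {set T}) a : a \in S ->
  [set A in edges_in S | a \in A] = (fun b => [set a; b]) @: nbhd S a.
Proof.
move=> aS; apply/setP => A; rewrite !inE; apply/idP/imsetP.
  case/andP => /and3P[/cards2P [x [y [neq_xy ->]]] cl sub].
  have e_xy : e x y by rewrite -is_clique2.
  rewrite !inE => /orP[]/eqP ->.
    by exists y => //; rewrite inE e_xy (subsetP sub) // !inE eqxx orbT.
  exists x; last by rewrite setUC.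
  by rewrite inE e_sym e_xy (subsetP sub) // !inE eqxx.
case=> b; rewrite inE => /andP[bS e_ab] ->.
rewrite cards2 adj_neq // is_clique2 ?adj_neq // e_ab !inE eqxx /= andbT.
by apply/subsetP => z; rewrite !inE => /orP[]/eqP->.
Qed.

Lemma handshake (S : {set T}) : 2 * #|edges_in S| = degsum S.
Proof.
rewrite (double_counting (c := 2)); last by move=> A; rewrite inE => /and3P[/eqP].
rewrite /degsum [RHS]big_mkcond /=; apply: eq_bigr => a _; case: ifP => aS.
  rewrite edges_in_at // card_in_imset // => b c.
  rewrite !inE => /andP[_ e_ab] /andP[_ e_ac] eq_bc.
  have : b \in [set a; c] by rewrite -eq_bc !inE eqxx orbT.
  by rewrite !inE => /orP[]/eqP // b_a; rewrite b_a e_irr in e_ab.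
apply/eqP; rewrite cards_eq0; apply/eqP/setP => A; rewrite !inE.
by apply/negP => /andP[/and3P[_ _ sub] aA]; rewrite (subsetP sub _ aA) in aS.
Qed.

Lemma triangle_incidence :
  3 * num_triangles e = \sum_v #|[set A in triangles | v \in A]|.
Proof. by rewrite (double_counting (c := 3)) // => A; rewrite inE => /andP[/eqP]. Qed.

Lemma triangles_at v : #|[set A in triangles | v \in A]| = #|edges_in (nbhd setT v)|.
Proof.
have notin_edge B : B \in edges_in (nbhd setT v) -> v \notin B.
  by rewrite inE => /and3P[_ _ sub]; apply/negP => /(subsetP sub); rewrite !inE e_irr.
suff -> : [set A in triangles | v \in A] = (fun B => v |: B) @: edges_in (nbhd setT v).
  by rewrite card_in_imset // => B C /notin_edge vB /notin_edge vC eq_BC;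
     rewrite -(setU1K vB) eq_BC setU1K.
apply/setP => A; rewrite !inE; apply/idP/imsetP.
  case/andP => /andP[card3 /cliqueP cl] vA; exists (A :\ v); last by rewrite setD1K.
  rewrite inE (cardsD1 v) vA in card3 *; apply/and3P; split => //.
    by apply/cliqueP => x y /setD1P[_ xA] /setD1P[_ yA]; apply: cl.
  by apply/subsetP => z /setD1P[z_v zA]; rewrite !inE cl // eq_sym.
case=> B edgeB ->; have vB := notin_edge B edgeB.
move: edgeB; rewrite inE => /and3P[card2 /cliqueP cl sub].
rewrite !inE eqxx andbT cardsU1 vB (eqP card2) /=.
apply/cliqueP => x y; rewrite !inE => /orP[/eqP->|xB] /orP[/eqP->|yB].
- by rewrite eqxx.
- by move=> _; move: (subsetP sub y yB); rewrite !inE.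
- by move=> _; move: (subsetP sub x xB); rewrite !inE e_sym.
- exact: cl.
Qed.

Lemma degsum_delete (S : {set T}) v :
  v \in S -> degsum S <= degsum (S :\ v) + 2 * #|nbhd S v|.
Proof.
move=> vS; rewrite /degsum (bigD1 v) //=.
have deg_split a : (a \in S) && (a != v) ->
    #|nbhd S a| = (e a v : nat) + #|nbhd (S :\ v) a|.
  move=> /andP[aS a_v]; rewrite (cardsD1 v) !inE vS /=; congr (_ + _).
  by apply: eq_card => b; rewrite !inE andbA.
have -> : \sum_(a in S :\ v) #|nbhd (S :\ v) a| = \sum_(a in S | a != v) #|nbhd (S :\ v) a|.
  by apply: eq_bigl => a; rewrite !inE andbC.
rewrite (eq_bigr _ deg_split) big_split /=.
suff : \sum_(a in S | a != v) (e a v : nat) <= #|nbhd S v| by lia.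
rewrite -sum1_card [X in _ <= X]big_mkcond /= big_mkcond /=.
by apply: leq_sum => a _; case: ifP => // /andP[aS _]; rewrite inE aS e_sym; case: (e v a).
Qed.

Definition closed_in (S C : {set T}) :=
  forall z y, z \in C -> y \in S -> e z y -> y \in C.

Lemma degsum_split (S C : {set T}) : C \subset S -> closed_in S C ->
  degsum S = degsum C + degsum (S :\: C).
Proof.
move=> sub cl; rewrite /degsum (bigID [in C]) /=; congr (_ + _).
  rewrite (eq_bigl [in C]); last by move=> a; rewrite andb_idl // => /(subsetP sub).
  apply: eq_bigr => a aC; apply: eq_card => b; rewrite !inE.
  apply/andP/andP => [[bS e_ab] | [bC ->]]; last by rewrite (subsetP sub).
  by rewrite (cl a b).
rewrite (eq_bigl [in S :\: C]); last by move=> a; rewrite !inE andbC.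
apply: eq_bigr => a /setDP[aS aC]; apply: eq_card => b; rewrite !inE.
apply/andP/andP => [[bS e_ab] | [/andP[_ ->] //]]; rewrite bS e_ab andbT; split => //.
by apply: contraNN aC => bC; rewrite (cl b a) // e_sym.
Qed.

Lemma degsum_le_complete (C : {set T}) : degsum C <= #|C| * (#|C| - 1).
Proof.
rewrite /degsum -sum_nat_const; apply: leq_sum => a aC.
rewrite [X in _ <= X - 1](cardsD1 a) aC add1n subSS subn0; apply: subset_leq_card.
by apply/subsetP => b; rewrite !inE => /andP[bC e_ab]; rewrite bC andbT eq_sym adj_neq.
Qed.

(* The path on the vertices [x :: s] has [size s] edges. *)
Definition path_in (S : {set T}) x s :=
  [&& uniq (x :: s), all (fun z => z \in S) (x :: s) & path e x s].

Definition path_free (S : {set T}) k := forall x s, path_in S x s -> size s < k.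

Definition longest_in (S : {set T}) x s :=
  path_in S x s /\ forall y t, path_in S y t -> size t <= size s.

Lemma path_in_sub (S S' : {set T}) x s : S' \subset S -> path_in S' x s -> path_in S x s.
Proof.
move=> sub /and3P[U A P]; apply/and3P; split => //.
by apply/allP => z /(allP A); apply: (subsetP sub).
Qed.

Lemma path_free_sub (S S' : {set T}) k : S' \subset S -> path_free S k -> path_free S' k.
Proof. by move=> sub freeS x s /(path_in_sub sub); apply: freeS. Qed.

Lemma path_in_take (S : {set T}) n x s : path_in S x s -> path_in S x (take n s).
Proof.
case/and3P => U A P; rewrite /path_in take_path // andbT.
rewrite -[x :: take n s]/(take n.+1 (x :: s)) take_uniq //.
by apply/allP => z /mem_take; apply: (allP A).
Qed.

Lemma exists_longest_path (S : {set T}) k x0 s0 : path_free S k -> path_in S x0 s0 ->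
  exists x s, longest_in S x s.
Proof.
move=> freeS; have [n] := ubnP (k - size s0); elim: n x0 s0 => // n IH x0 s0 lt_n p0.
have [[y [t [pt longer]]] | none] :=
  classic (exists y t, path_in S y t /\ size s0 < size t).
  by apply: (IH y t) => //; have := freeS _ _ pt; have := freeS _ _ p0; lia.
exists x0, s0; split => // y t pt; rewrite leqNgt; apply/negP => longer.
by apply: none; exists y, t.
Qed.

(* The maximality of the vertex set of a longest path forces it to be closed
   as soon as some cyclic ordering of it is a cycle: any outside neighbour
   would extend the cycle, opened at that vertex, to a longer path. *)
Lemma longest_cycle_closed (S : {set T}) x s c : longest_in S x s ->
  perm_eq c (x :: s) -> cycle e c -> closed_in S [set z in x :: s].
Proof.
move=> [/and3P[U A _] longest] perm_c cyc_c z y; rewrite !inE => zp yS e_zy.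
apply: contraT => yn; have zc : z \in c by rewrite (perm_mem perm_c).
have [i t rot_c] := rot_to zc.
have same_t : z :: t =i x :: s by move=> w; rewrite -rot_c mem_rot (perm_mem perm_c).
have : path_in S y (z :: t).
  apply/and3P; split.
  - by rewrite cons_uniq same_t yn -rot_c rot_uniq (perm_uniq perm_c).
  - apply/allP => w; rewrite in_cons => /orP[/eqP-> // |]; rewrite same_t.
    exact: (allP A).
  - move: cyc_c; rewrite -(rot_cycle i) rot_c /= rcons_path => /andP[pt _].
    by rewrite /= e_sym e_zy pt.
by move/longest; rewrite -rot_c size_rot (perm_size perm_c) ltnn.
Qed.

Lemma cycle_rotate_path x s1 z s2 : path e x (s1 ++ z :: s2) -> e x z ->
  e (last x (s1 ++ z :: s2)) (last x s1) -> cycle e (x :: s1 ++ rev (z :: s2)).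
Proof.
rewrite cat_path last_cat /= => /and3P[P1 _ P2] e_xz e_lw.
rewrite /= rcons_cat cat_path P1 rcons_path rev_cons last_rcons e_sym e_xz andbT /=.
have := rev_path e z (rcons s2 (last x s1)).
rewrite last_rcons belast_rcons rev_cons => ->.
rewrite (@eq_path _ _ e); last by move=> a b; rewrite e_sym.
by rewrite rcons_path P2 e_lw.
Qed.

Section LongestPath.

Variables (S : {set T}) (x : T) (s : seq T).
Hypothesis longest : longest_in S x s.

Lemma longest_nbhd_first y : y \in nbhd S x -> y \in s.
Proof.
case: longest => /and3P[U A P] maxs; rewrite inE => /andP[yS e_xy].
apply: contraT => ys; have : path_in S y (x :: s).
  rewrite /path_in cons_uniq U andbT in_cons negb_or eq_sym adj_neq //= ys yS e_sym e_xy P.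
  by move: A => /= ->.
by move/maxs; rewrite ltnn.
Qed.

Lemma longest_nbhd_last y :
  y \in nbhd S (last x s) -> (y \in x :: s) && (y != last x s).
Proof.
case: longest => /and3P[U A P] maxs; rewrite inE => /andP[yS e_ly].
rewrite eq_sym adj_neq // andbT; apply: contraT => yn.
have : path_in S x (rcons s y).
  by rewrite /path_in -rcons_cons rcons_uniq yn U all_rcons yS A rcons_path P e_ly.
by move/maxs; rewrite size_rcons ltnn.
Qed.

Lemma index_lt_last w : w \in x :: s -> w != last x s -> index w (x :: s) < size s.
Proof.
move=> wp; apply: contraNT; rewrite -leqNgt => ge_s.
have : index w (x :: s) < (size s).+1 by rewrite -[(size s).+1]/(size (x :: s)) index_mem.
rewrite ltnS => le_s; rewrite (last_nth x) -(nth_index x wp).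
by rewrite [index _ _](@anti_leq _ (size s)) ?le_s ?ge_s.
Qed.

(* Posa's rotation: since the two ends of a longest path have more than
   size s neighbours between them, all lying on the path, some neighbour z of
   x directly follows a neighbour w of last x s; this closes a cycle. *)
Lemma longest_path_cycle : size s < #|nbhd S x| + #|nbhd S (last x s)| ->
  exists c, perm_eq c (x :: s) /\ cycle e c.
Proof.
move=> deg_ends; case: (longest) => /and3P[U _ P] _.
have Us : uniq s by move: U; rewrite cons_uniq => /andP[].
pose succ w := nth x s (index w (x :: s)).
pose R := succ @: nbhd S (last x s).
have cardR : #|R| = #|nbhd S (last x s)|.
  apply: card_in_imset => w1 w2 /longest_nbhd_last/andP[w1p w1l].
  move=> /longest_nbhd_last/andP[w2p w2l] /eqP; rewrite /succ nth_uniq ?index_lt_last //.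
  by move=> /eqP eq_idx; rewrite -(nth_index x w1p) eq_idx nth_index.
have cover : nbhd S x :|: R \subset [set z in s].
  rewrite subUset; apply/andP; split; apply/subsetP => z.
    by move/longest_nbhd_first; rewrite inE.
  case/imsetP => w /longest_nbhd_last/andP[wp wl] ->.
  by rewrite inE /succ mem_nth // index_lt_last.
have [disj | [z]] := set_0Vmem (nbhd S x :&: R).
  have := cardsUI (nbhd S x) R; rewrite disj cards0 addn0 cardR.
  have := subset_leq_card cover.
  have -> : #|[set z in s]| = size s.
    by rewrite -(card_uniqP Us); apply: eq_card => w; rewrite inE.
  lia.
rewrite inE => /andP[zN /imsetP[w wN z_succ]].
have zs : z \in s by exact: longest_nbhd_first.
move: (zN) (wN); rewrite !inE => /andP[_ e_xz] /andP[_ e_lw].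
move/longest_nbhd_last: wN => /andP[wp wl].
have w_pred : w = nth x (x :: s) (index z s).
  by rewrite z_succ /succ index_uniq ?index_lt_last // nth_index.
move: w_pred e_lw U P; case/splitPr: s / zs => s1 s2 w_pred e_lw U P.
have zs1 : z \notin s1 by move: U; rewrite /= cat_uniq /= => /and4P[_ _ /norP[]].
have w_last : w = last x s1.
  rewrite w_pred index_cat (negbTE zs1) /= eqxx addn0 -cat_cons nth_cat /= ltnSn.
  by rewrite (last_nth x).
exists (x :: s1 ++ rev (z :: s2)); split; first by rewrite perm_cons perm_cat2l perm_rev.
by apply: cycle_rotate_path; rewrite -?w_last.
Qed.

End LongestPath.

Lemma min_degree_closed_set (S : {set T}) k x0 : x0 \in S -> path_free S k ->
  (forall v, v \in S -> k <= 2 * #|nbhd S v|) ->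
  exists C : {set T}, [/\ C \subset S, closed_in S C, 0 < #|C| & #|C| <= k].
Proof.
move=> x0S freeS min_deg.
have [x [s longest]] : exists x s, longest_in S x s.
  by apply: (exists_longest_path freeS (s0 := [::]) (x0 := x0)); rewrite /path_in /= x0S.
case: (longest) => /and3P[U A _] _; have lt_k := freeS _ _ (proj1 longest).
have [c [perm_c cyc_c]] : exists c, perm_eq c (x :: s) /\ cycle e c.
  apply: (longest_path_cycle longest); apply: leq_trans lt_k _.
  have := min_deg x (allP A _ (mem_head _ _)).
  (* [set] merges two elaborations of [last x s] that [lia] would see as distinct *)
  have := min_deg _ (allP A _ (mem_last _ _)); set y := last x s; lia.
have cardC : #|[set z in x :: s]| = (size s).+1.
  rewrite -[(size s).+1]/(size (x :: s)) -(card_uniqP U).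
  by apply: eq_card => z; rewrite inE.
exists [set z in x :: s]; split; rewrite ?cardC //.
  by apply/subsetP => z; rewrite inE; apply: (allP A).
exact: longest_cycle_closed perm_c cyc_c.
Qed.

Theorem erdos_gallai_path k (S : {set T}) : 0 < k -> path_free S k ->
  degsum S <= (k - 1) * #|S|.
Proof.
move=> k_gt0; have [n] := ubnP #|S|; elim: n S => // n IH S /ltnSE le_n freeS.
have IH_sub (S' : {set T}) : S' \subset S -> #|S'| < #|S| -> degsum S' <= (k - 1) * #|S'|.
  by move=> sub lt_S; apply: IH; [lia | apply: path_free_sub sub freeS].
have [v /andP[vS low_v] | high] :=
  pickP (fun v => (v \in S) && (2 * #|nbhd S v| < k)).
  have := degsum_delete vS; have := cardsD1 v S; rewrite vS.
  have := IH_sub (S :\ v) (subD1set S v); rewrite (cardsD1 v S) vS; nia.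
have [-> | [x0 x0S]] := set_0Vmem S; first by rewrite /degsum big_set0.
have [C [sub closed C_gt0 C_le_k]] : exists C : {set T},
    [/\ C \subset S, closed_in S C, 0 < #|C| & #|C| <= k].
  apply: min_degree_closed_set x0S freeS _ => v vS.
  by move: (high v); rewrite vS /= ltnNge => /negbFE.
rewrite (degsum_split sub closed).
have := cardsID C S; rewrite (setIidPr sub).
have := IH_sub (S :\: C) (subsetDl S C); have := degsum_le_complete C.
have : #|C| * (#|C| - 1) <= #|C| * (k - 1) by rewrite leq_mul2l; lia.
nia.
Qed.

Lemma nbhd_path_cycle v x s : path_in (nbhd setT v) x s -> has_cycle e (size s).+2.
Proof.
case/and3P => U A P.
have adj y : y \in x :: s -> e v y by move=> /(allP A); rewrite !inE.
apply: (@has_cycle_of_seq _ _ v (x :: s)).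
  by rewrite cons_uniq U andbT; apply: contraT => /negbNE/adj; rewrite e_irr.
by rewrite /= adj ?mem_head //= rcons_path P e_sym adj ?mem_last.
Qed.

Lemma nbhd_path_free l v : 2 <= l -> ~ has_cycle e l -> path_free (nbhd setT v) (l - 2).
Proof.
move=> l_ge2 no_cycle x s p; rewrite ltnNge; apply/negP => long_s.
apply: no_cycle; have := nbhd_path_cycle (path_in_take (l - 2) p).
by rewrite size_takel // -addn2 subnK.
Qed.

End SimpleGraph.

Unset Implicit Arguments.
Theorem lemma3p1 (T : finType) (e : rel T) (l : nat) :
  simple_graph e -> 3 <= l -> ~ has_cycle e l ->
  3 * num_triangles e <= (l - 3) * num_edges e.
Proof.
move=> [e_sym e_irr] l_ge3 no_cycle.
have nbhd_bound v : degsum e (nbhd e setT v) <= (l - 3) * #|nbhd e setT v|.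
  have -> : l - 3 = l - 2 - 1 by lia.
  by apply: erdos_gallai_path => //; [lia | apply: nbhd_path_free => //; lia].
suff : 2 * (3 * num_triangles e) <= 2 * ((l - 3) * num_edges e) by rewrite leq_pmul2l.
rewrite triangle_incidence mulnCA num_edgesE handshake // /degsum.
rewrite (eq_bigl _ _ (@in_setT T)).
rewrite !big_distrr /=; apply: leq_sum => v _.
by rewrite triangles_at // handshake.
Qed.
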